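(* For each $j=0,\dots,4$, $P\Gamma^{\mathbb{R}}_j\cong PO(\Psi_j)$, where $O(\Psi_j)$ is the group of automorphisms of $\mathbb{Z}^5$ preserving the quadratic form $\Psi_j$ and $PO(\Psi_j)=O(\Psi_j)/\{\pm1\}$, with $\Psi_j(y_0,\dots,y_4)=-y_0^2+\sum_{i=1}^{4-j}y_i^2+3\sum_{i=5-j}^{4}y_i^2$ (so $j$ of the coefficients of $y_1^2,\dots,y_4^2$, namely the last $j$, equal $3$ and the others equal $1$).
   Context: Let $\omega=e^{2\pi i/3}$, $\mathcal{E}=\mathbb{Z}[\omega]$, $\theta=\sqrt{-3}$. Let $\Lambda=\mathcal{E}^5$ with Hermitian form $h(x,y)=-x_0\bar y_0+x_1\bar y_1+\dots+x_4\bar y_4$, let $\Gamma$ be its group of $\mathcal{E}$-linear isometries, and $P\Gamma=\Gamma/\{\text{unit scalars}\}$. Complex hyperbolic space $\mathbb{C}H^4$ is the set of $h$-negative lines in $\mathbb{C}^5=\Lambda\otimes_{\mathcal{E}}\mathbb{C}$, on which $P\Gamma$ acts. For $j=0,\dots,4$ let $\xi_j$ be the antilinear map $(x_0,\dots,x_4)\mapsto(\bar x_0,\dots,\bar x_{4-j},-\bar x_{5-j},\dots,-\bar x_4)$ (conjugate all coordinates, negate the last $j$), let $H^4_j$ be its fixed-point set in $\mathbb{C}H^4$ (a copy of real hyperbolic $4$-space), and let $P\Gamma^{\mathbb{R}}_j$ be the stabilizer of $H^4_j$ in $P\Gamma$. *)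

From HB Require Import structures.
From mathcomp Require Import all_boot all_order all_algebra all_field.
Set Implicit Arguments. Unset Strict Implicit. Unset Printing Implicit Defensive.
Import Order.TTheory GRing.Theory Num.Theory.
Local Open Scope ring_scope.

(* omega = e^{2 pi i/3} = (-1 + i sqrt 3)/2 *)
Definition omega : algC := (-1 + 'i * sqrtC 3) / 2.

Definition inE (x : algC) : Prop :=
  exists a b : int, x = a%:~R + b%:~R * omega.

Definition mxE5 (g : 'M[algC]_5) : Prop := forall i k, inE (g i k).
Definition vecE5 (x : 'cV[algC]_5) : Prop := forall i, inE (x i 0).

Definition hsign (i : 'I_5) : algC := if i == ord0 then -1 else 1.
Definition hform (x y : 'cV[algC]_5) : algC :=
  \sum_(i < 5) hsign i * x i 0 * (y i 0)^*.

(* Gamma: E-linear isometries of Lambda = E^5 (as 5x5 matrices acting on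
   column vectors, bijective on Lambda) *)
Definition Gamma (g : 'M[algC]_5) : Prop :=
  [/\ mxE5 g, g \in unitmx, mxE5 (invmx g) &
      forall x y, vecE5 x -> vecE5 y -> hform (g *m x) (g *m y) = hform x y].

Definition unit_scalar (g : 'M[algC]_5) : Prop :=
  exists u : algC, [/\ u != 0, inE u, inE u^-1 & g = u%:M].

Definition xi (j : nat) (x : 'cV[algC]_5) : 'cV[algC]_5 :=
  \col_(i < 5) ((if (5 - j <= i)%N then -1 else 1) * (x i 0)^*).

(* x spans a line belonging to H^4_j: an h-negative line fixed by xi_j *)
Definition inH (j : nat) (x : 'cV[algC]_5) : Prop :=
  [/\ x != 0, hform x x < 0 & exists c : algC, xi j x = c *: x].

(* preimage in Gamma of the stabilizer P Gamma^R_j of H^4_j *)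
Definition StabR (j : nat) (g : 'M[algC]_5) : Prop :=
  [/\ Gamma g,
      forall x, inH j x -> inH j (g *m x) &
      forall y, inH j y -> exists x, inH j x /\ g *m x = y].

Definition psicoef (j : nat) (i : 'I_5) : int :=
  if i == ord0 then -1 else if (5 - j <= i)%N then 3 else 1.
Definition Psi (j : nat) (y : 'cV[int]_5) : int :=
  \sum_(i < 5) psicoef j i * (y i 0) ^+ 2.

Definition OPsi (j : nat) (A : 'M[int]_5) : Prop :=
  A \in unitmx /\ forall y, Psi j (A *m y) = Psi j y.

(* isomorphism  (StabR j)/{unit scalars}  ~=  O(Psi_j)/{+-1}, encoded by a map
   f from StabR j to O(Psi_j) that is a homomorphism modulo +-1, whose kernel
   modulo +-1 is exactly the unit scalars, and which is onto modulo +-1. *)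
Definition pm_eq (A B : 'M[int]_5) : Prop := A = B \/ A = - B.

Definition PGammaR_iso_PO (j : nat) : Prop :=
  exists f : 'M[algC]_5 -> 'M[int]_5,
  [/\ forall g, StabR j g -> OPsi j (f g),
      forall g1 g2, StabR j g1 -> StabR j g2 ->
        pm_eq (f (g1 *m g2)) (f g1 *m f g2),
      forall g, StabR j g -> (pm_eq (f g) 1%:M <-> unit_scalar g) &
      forall A, OPsi j A -> exists g, StabR j g /\ pm_eq (f g) A].

From Pilot Require Import Defs.
From HB Require Import structures.
From mathcomp Require Import all_boot all_order all_algebra all_field.
From mathcomp Require Import ring zify.
From Stdlib Require Import ClassicalEpsilon.
Set Implicit Arguments. Unset Strict Implicit. Unset Printing Implicit Defensive.
Import Order.TTheory GRing.Theory Num.Theory.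
Local Open Scope ring_scope.

(* Let theta = sqrt(-3), let S = diag(xsign) be the sign pattern of xi_j (so xi_j x = S conj(x))
   and D = diag(tscale), with entries 1 in the first 5-j places and theta in the last j; then
   conj(D) = S D and D^T h conj(D) is the Gram matrix of Psi_j.  Hence A |-> D A D^-1 maps
   O(Psi_j) into the stabilizer of H^4_j: it preserves h, commutes with xi_j, and is integral
   over E because Psi_j-orthogonality forces A_ik to be divisible by 3 when i < 5-j <= k.
   Conversely, if g stabilizes H^4_j, evaluating on e_0 and on the negative vectors
   x e_0 + D_kk e_k (x = 2, 3) shows S conj(g) S = lam g for a scalar lam; lam is a unit of E
   with lam^3 = 1 (compare det g with its conjugate), so lam^-1 g is xi_j-real, hence of the
   form D A D^-1 with A integral, and A is determined by g up to sign. *)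

Definition theta : algC := 'i * sqrtC 3.

Lemma thetaX2 : theta ^+ 2 = -3.
Proof. by rewrite exprMn sqrCi sqrtCK mulN1r. Qed.

Lemma conj_theta : theta^* = - theta.
Proof. by rewrite /theta rmorphM /= conjCi mulNr geC0_conj // sqrtC_ge0 ler0n. Qed.

Lemma theta_neq0 : theta != 0.
Proof.
by apply/eqP => h; move: thetaX2; rewrite h expr0n => /eqP; rewrite eq_sym oppr_eq0 pnatr_eq0.
Qed.

Lemma theta_omega : theta = 1 + 2 * omega.
Proof. by rewrite /omega /theta; field. Qed.

Lemma omega_cyclotomic : omega ^+ 2 + omega + 1 = 0.
Proof.
have -> : omega ^+ 2 + omega + 1 = (theta ^+ 2 + 3) / 4 by rewrite /omega /theta; field.
by rewrite thetaX2 addNr mul0r.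
Qed.

(* [ring] does not know the minimal polynomial of [omega]; this lets it work modulo it. *)
Lemma eq_mod_cyclotomic (x y k : algC) : x - y = k * (omega ^+ 2 + omega + 1) -> x = y.
Proof. by rewrite omega_cyclotomic mulr0 => /eqP; rewrite subr_eq0 => /eqP. Qed.

Lemma conj_omega : omega^* = -1 - omega.
Proof.
rewrite /omega rmorphM rmorphD rmorphN /= conjC1 -/theta conj_theta fmorphV /= conjC_nat.
by rewrite /theta; field.
Qed.

Lemma omegaX3 : omega ^+ 3 = 1.
Proof. by apply: (@eq_mod_cyclotomic _ _ (omega - 1)); ring. Qed.

Definition eisenstein : {pred algC} :=
  fun x => if excluded_middle_informative (Defs.inE x) then true else false.

Lemma eisensteinP x : reflect (Defs.inE x) (x \in eisenstein).
Proof. by rewrite unfold_in /eisenstein; case: excluded_middle_informative; constructor. Qed.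

Lemma eisenstein_subring_closed : subring_closed eisenstein.
Proof.
split; first by apply/eisensteinP; exists 1, 0; rewrite mul0r addr0.
- move=> _ _ /eisensteinP[a [b ->]] /eisensteinP[c [d ->]].
  by apply/eisensteinP; exists (a - c), (b - d); rewrite !rmorphB /=; ring.
- move=> _ _ /eisensteinP[a [b ->]] /eisensteinP[c [d ->]].
  apply/eisensteinP; exists (a * c - b * d), (a * d + b * c - b * d).
  rewrite !rmorphB !rmorphD !rmorphM /=.
  by apply: (@eq_mod_cyclotomic _ _ (b%:~R * d%:~R)); ring.
Qed.

HB.instance Definition _ :=
  GRing.isSubringClosed.Build algC eisenstein eisenstein_subring_closed.

Lemma eisenstein_omega : omega \in eisenstein.
Proof. by apply/eisensteinP; exists 0, 1; rewrite mul1r add0r. Qed.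

Lemma eisenstein_theta : theta \in eisenstein.
Proof. by rewrite theta_omega rpredD ?rpred1 // rpredM ?rpred_nat ?eisenstein_omega. Qed.

Lemma conjE_coord (a b : int) :
  (a%:~R + b%:~R * omega)^* = (a - b)%:~R - b%:~R * omega :> algC.
Proof. by rewrite rmorphD rmorphM /= !rmorph_int conj_omega rmorphB; ring. Qed.

Lemma eisenstein_conj x : x \in eisenstein -> x^* \in eisenstein.
Proof.
move=> /eisensteinP[a [b ->]].
by rewrite conjE_coord rpredB ?rpred_int // rpredM ?rpred_int ?eisenstein_omega.
Qed.

Lemma normE_coord (a b : int) :
  (a%:~R + b%:~R * omega) * (a%:~R + b%:~R * omega)^* = (a * a - a * b + b * b)%:~R :> algC.
Proof.
rewrite conjE_coord !rmorphD ?rmorphB !rmorphM /=.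
by apply: (@eq_mod_cyclotomic _ _ (- (b%:~R * b%:~R))); ring.
Qed.

Lemma eisenstein_norm x : x \in eisenstein -> exists n : nat, x * x^* = n%:R.
Proof.
move=> /eisensteinP[a [b ->]]; exists (absz (a * a - a * b + b * b)).
have norm_ge0 : 0 <= a * a - a * b + b * b.
  have : 4 * (a * a - a * b + b * b) = (2 * a - b) ^+ 2 + 3 * b ^+ 2 by ring.
  nia.
by rewrite -[_%:R]/((Posz _)%:~R) gez0_abs // normE_coord.
Qed.

Definition eisenstein_unit (u : algC) :=
  [/\ u != 0, u \in eisenstein & u^-1 \in eisenstein].

Lemma eisenstein_unit_norm u : eisenstein_unit u -> u * u^* = 1.
Proof.
case=> u0 /eisenstein_norm[m hm] /eisenstein_norm[n hn].
have : (m * n)%:R = 1 :> algC.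
  by rewrite natrM -hm -hn mulrACA -rmorphM /= divff // conjC1 mulr1.
move/(congr1 (fun x : algC => x == 1)); rewrite pnatr_eq1 eqxx => /eqP/eqP.
by rewrite muln_eq1 => /andP[/eqP mE _]; rewrite hm mE.
Qed.

Lemma eisenstein_unit_root6 u : eisenstein_unit u -> u ^+ 6 = 1.
Proof.
move=> hu; have un := eisenstein_unit_norm hu.
have [_ /eisensteinP[a [b uE]] _] := hu.
have ab1 : a * a - a * b + b * b = 1.
  by apply: (@intr_inj algC); rewrite -normE_coord -uE un.
have omega2 : omega ^+ 2 = -1 - omega by apply: (@eq_mod_cyclotomic _ _ 1); ring.
suff [s [k ->]] : exists (s : bool) (k : nat), u = (-1) ^+ s * omega ^+ k.
  by rewrite exprMn exprAC -signr_odd -exprM exprAC (exprM omega 3 2) omegaX3 !expr1n mulr1.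
have : (a = 1 /\ b = 0) \/ (a = -1 /\ b = 0) \/ (a = 0 /\ b = 1) \/ (a = 0 /\ b = -1)
       \/ (a = 1 /\ b = 1) \/ (a = -1 /\ b = -1) by nia.
rewrite uE; case=> [|[|[|[|[]]]]] [-> ->];
  [exists false, 0%N | exists true, 0%N | exists false, 1%N | exists true, 1%N
  | exists true, 2%N | exists false, 2%N]; rewrite ?omega2 /=; ring.
Qed.

Lemma eisenstein_real x : x \in eisenstein -> x^* = x -> exists n : int, x = n%:~R.
Proof.
move=> /eisensteinP[a [b ->]]; rewrite conjE_coord => /eqP; rewrite -subr_eq0.
have -> : (a - b)%:~R - b%:~R * omega - (a%:~R + b%:~R * omega) = - (b%:~R * theta) :> algC.
  by rewrite theta_omega rmorphB; ring.
rewrite oppr_eq0 mulf_eq0 (negPf theta_neq0) orbF intr_eq0 => /eqP->.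
by exists a; rewrite mul0r addr0.
Qed.

Lemma eisenstein_imag x : x \in eisenstein -> x^* = - x -> exists n : int, x = n%:~R * theta.
Proof.
move=> /eisensteinP[a [b ->]]; rewrite conjE_coord => /eqP; rewrite -addr_eq0.
have -> : (a - b)%:~R - b%:~R * omega + (a%:~R + b%:~R * omega) = (2 * a - b)%:~R :> algC.
  by rewrite !rmorphB rmorphM /=; ring.
rewrite intr_eq0 subr_eq0 => /eqP <-.
by exists a; rewrite theta_omega rmorphM /=; ring.
Qed.

Lemma eisenstein_unit_real u : eisenstein_unit u -> u^* = u -> u = 1 \/ u = -1.
Proof.
move=> hu uR; have [_ uE _] := hu; have [n un] := eisenstein_real uE uR.
have : n * n = 1.
  by apply: (@intr_inj algC); rewrite rmorphM /= -un -{2}uR eisenstein_unit_norm.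
by rewrite un => /eqP; rewrite -expr2 sqrf_eq1 => /orP[] /eqP->; [left | right].
Qed.

Lemma eisenstein_unit1 : eisenstein_unit 1.
Proof. by split; rewrite ?oner_eq0 ?invr1 ?rpred1. Qed.

Lemma eisenstein_unitN u : eisenstein_unit u -> eisenstein_unit (- u).
Proof. by case=> u0 uE uiE; split; rewrite ?oppr_eq0 ?invrN ?rpredN. Qed.

Lemma eisenstein_unitM u v :
  eisenstein_unit u -> eisenstein_unit v -> eisenstein_unit (u * v).
Proof.
by case=> u0 uE uiE [v0 vE viE]; split; rewrite ?mulf_neq0 ?invfM ?rpredM.
Qed.

Lemma eisenstein_unitV u : eisenstein_unit u -> eisenstein_unit u^-1.
Proof. by case=> u0 uE uiE; split; rewrite ?invr_eq0 ?invrK. Qed.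

Lemma scale_intmx_uniq m n (nu nu' : algC) (A B : 'M[int]_(m, n)) :
  eisenstein_unit nu -> eisenstein_unit nu' ->
  nu *: map_mx intr A = nu' *: map_mx intr B -> A = B \/ A = - B.
Proof.
move=> hnu hnu' /matrixP eAB.
have [r_unit nu0] : eisenstein_unit (nu' / nu) /\ nu != 0.
  by split; [apply: eisenstein_unitM (eisenstein_unitV _) | case: hnu].
have r0 : nu' / nu != 0 by case: r_unit.
have AE i k : (A i k)%:~R = nu' / nu * (B i k)%:~R :> algC.
  apply: (mulfI nu0); move: (eAB i k); rewrite !mxE => ->.
  by rewrite mulrA mulrCA divff // mulr1.
case: (boolP [exists i, exists k, A i k != 0]) => [/existsP[i /existsP[k Aik]] | /existsPn A0].
  have Bik : (B i k)%:~R != 0 :> algC.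
    by apply: contraNneq Aik => B0; rewrite -(intr_eq0 algC) AE B0 mulr0.
  have r_real : (nu' / nu)^* = nu' / nu.
    by rewrite -[nu' / nu](mulfK Bik) -AE rmorphM fmorphV /= !rmorph_int.
  have [] := eisenstein_unit_real r_unit r_real => r1; [left | right];
    by apply/matrixP => a b; apply: (@intr_inj algC); rewrite AE r1 ?mxE ?rmorphN /= ?mul1r ?mulN1r.
left; apply/matrixP => a b.
have /existsPn/(_ b)/negPn/eqP Aab := A0 a.
move: (AE a b); rewrite Aab rmorph0 => /esym/eqP.
by rewrite mulf_eq0 (negPf r0) intr_eq0 => /eqP->.
Qed.

Lemma eigenvector_pencil (F : fieldType) n (M : 'M[F]_n) (u w : 'cV[F]_n) (x1 x2 a c1 c2 : F) :
  x1 != x2 -> (forall p q, p *: u + q *: w = 0 -> p = 0 /\ q = 0) ->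
  M *m u = a *: u -> M *m (x1 *: u + w) = c1 *: (x1 *: u + w) ->
  M *m (x2 *: u + w) = c2 *: (x2 *: u + w) -> M *m w = a *: w.
Proof.
move=> x12 indep Mu.
have Mw x c : M *m (x *: u + w) = c *: (x *: u + w) -> M *m w = (c * x - a * x) *: u + c *: w.
  rewrite mulmxDr -scalemxAr Mu scalerA => /(canRL (addKr _)) ->.
  by rewrite scalerDr scalerA addrA -scaleNr -scalerDl [- _ + _]addrC [x * a]mulrC.
move=> /Mw Mw1 /Mw Mw2.
have [] : (c1 * x1 - a * x1) - (c2 * x2 - a * x2) = 0 /\ c1 - c2 = 0.
  apply: indep; rewrite scalerBl [(c1 - c2) *: w]scalerBl addrACA -opprD -Mw1 -Mw2.
  exact: subrr.
move=> + /eqP; rewrite subr_eq0 => + /eqP c12; rewrite -c12.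
have -> : c1 * x1 - a * x1 - (c1 * x2 - a * x2) = (c1 - a) * (x1 - x2) by ring.
move=> /eqP; rewrite mulf_eq0 subr_eq0 subr_eq0 (negPf x12) orbF => /eqP c1a.
by rewrite Mw1 c1a subrr scale0r add0r.
Qed.

Lemma mulmx_tr_diagE (R : comPzRingType) n p (X Y : 'M[R]_(n, p)) (d : 'rV[R]_n) a b :
  (X^T *m diag_mx d *m Y) a b = \sum_i X i a * d 0 i * Y i b.
Proof. by rewrite mul_mx_diag !mxE; apply: eq_bigr => i _; rewrite !mxE. Qed.

Lemma delta_mulmxE (R : pzSemiRingType) n (X : 'M[R]_n) a b :
  ((delta_mx a (0 : 'I_1))^T *m X *m delta_mx b (0 : 'I_1)) 0 0 = X a b.
Proof. by rewrite trmx_delta -rowE -colE !mxE. Qed.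

Lemma quadratic_form_eq0 n (Q : 'M[int]_n) :
  Q^T = Q -> (forall y : 'cV_n, (y^T *m Q *m y) 0 0 = 0) -> Q = 0.
Proof.
move=> Qsym Q0; have Qdiag a : Q a a = 0 by rewrite -delta_mulmxE Q0.
apply/matrixP => a b; have := Q0 (delta_mx a 0 + delta_mx b 0).
have addE (X Y : 'M[int]_1) : (X + Y) 0 0 = X 0 0 + Y 0 0 by rewrite mxE.
rewrite !mulmxDr raddfD /= !mulmxDl !addE !delta_mulmxE !Qdiag add0r addr0.
have -> : Q b a = Q a b by rewrite -{1}Qsym mxE.
by rewrite -mulr2n mxE => /eqP; rewrite mulrn_eq0 => /eqP.
Qed.

Definition hermJ : 'M[algC]_5 := diag_mx (\row_i hsign i).

Definition gram (M : 'M[algC]_5) : 'M[algC]_5 := M^T *m hermJ *m map_mx Num.conj M.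

Lemma hform_mxE x y : hform x y = (x^T *m hermJ *m map_mx Num.conj y) 0 0.
Proof. by rewrite mulmx_tr_diagE; apply: eq_bigr => i _; rewrite !mxE [hsign i * _]mulrC. Qed.

Lemma hform_mulmx L x y : hform (L *m x) (L *m y) = (x^T *m gram L *m map_mx Num.conj y) 0 0.
Proof. by rewrite hform_mxE trmx_mul map_mxM !mulmxA. Qed.

Lemma gram_hform L x y : gram L = hermJ -> hform (L *m x) (L *m y) = hform x y.
Proof. by move=> gL; rewrite hform_mulmx gL hform_mxE. Qed.

Lemma gram1 : gram 1%:M = hermJ.
Proof. by rewrite /gram trmx1 map_mx1 mul1mx mulmx1. Qed.

Lemma hform_delta L a b : hform (L *m delta_mx a 0) (L *m delta_mx b 0) = gram L a b.
Proof. by rewrite hform_mulmx (map_delta_mx Num.conj) delta_mulmxE. Qed.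

Lemma Gamma_gram g : Gamma g -> gram g = hermJ.
Proof.
case=> _ _ _ hg; apply/matrixP => a b.
have deltaE c : vecE5 (delta_mx c 0) by move=> i; rewrite mxE; apply/eisensteinP; rewrite rpred_nat.
by rewrite -hform_delta hg // -gram1 -hform_delta !mul1mx.
Qed.

Lemma gramZ nu M : gram (nu *: M) = (nu * nu^*) *: gram M.
Proof.
by rewrite /gram map_mxZ /= linearZ /= [(nu *: M)^T]linearZ /= -!scalemxAl scalerA mulrC.
Qed.

Lemma det_eisenstein M : mxE5 M -> \det M \in eisenstein.
Proof.
move=> ME; apply: rpred_sum => s _; rewrite rpredM ?rpred_sign //.
by apply: rpred_prod => i _; apply/eisensteinP.
Qed.

Lemma Gamma_det_unit g : Gamma g -> eisenstein_unit (\det g).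
Proof.
case=> gE ug giE _; split; last by rewrite -det_inv det_eisenstein.
  by rewrite -unitfE -unitmxE.
exact: det_eisenstein.
Qed.

Section Twist.

Variable j : nat.
Hypothesis j_le4 : (j <= 4)%N.

Definition xsign (i : 'I_5) : algC := if (5 - j <= i)%N then -1 else 1.
Definition tscale (i : 'I_5) : algC := if (5 - j <= i)%N then theta else 1.

Lemma xsign_sq i : xsign i * xsign i = 1.
Proof. by rewrite /xsign; case: ifP; rewrite ?mulrNN mulr1. Qed.

Lemma conj_xsign i : (xsign i)^* = xsign i.
Proof. by rewrite /xsign; case: ifP; rewrite ?rmorphN /= conjC1. Qed.

Lemma conj_tscale i : (tscale i)^* = xsign i * tscale i.
Proof. by rewrite /xsign /tscale; case: ifP; rewrite ?conj_theta ?conjC1 ?mulN1r ?mulr1. Qed.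

Lemma tscale_neq0 i : tscale i != 0.
Proof. by rewrite /tscale; case: ifP; rewrite ?theta_neq0 ?oner_eq0. Qed.

Lemma xsign0 : xsign ord0 = 1.
Proof. by rewrite /xsign; case: ifP => //=; lia. Qed.

Lemma psicoefE i : (psicoef j i)%:~R = hsign i * (tscale i * (tscale i)^*).
Proof.
rewrite conj_tscale /psicoef /hsign /tscale /xsign; case: eqP => [-> | _] /=.
  by case: ifP => /= [|_]; [lia | rewrite !mulr1].
by case: ifP => _; rewrite ?mulr1 // mulN1r mulrN -expr2 thetaX2 opprK mul1r.
Qed.

Definition xsignmx : 'M[algC]_5 := diag_mx (\row_i xsign i).

Definition xi_conj (M : 'M[algC]_5) : 'M[algC]_5 := xsignmx *m map_mx Num.conj M *m xsignmx.

Lemma xi_conjE M i k : xi_conj M i k = xsign i * (M i k)^* * xsign k.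
Proof. by rewrite /xi_conj mul_mx_diag mul_diag_mx !mxE. Qed.

Lemma xi_mulmx M x : xi j (M *m x) = xi_conj M *m xi j x.
Proof.
apply/matrixP => i z; rewrite [LHS]mxE [RHS]mxE mxE rmorph_sum mulr_sumr.
apply: eq_bigr => k _; rewrite xi_conjE !mxE -/(xsign i) -/(xsign k) rmorphM.
by rewrite -!mulrA [xsign k * _]mulrA xsign_sq mul1r.
Qed.

Lemma xi_conjK M : xi_conj (xi_conj M) = M.
Proof.
apply/matrixP => i k; rewrite !xi_conjE !rmorphM /= !conj_xsign conjCK.
transitivity (xsign i * xsign i * M i k * (xsign k * xsign k)); first by ring.
by rewrite !xsign_sq mulr1 mul1r.
Qed.

Lemma xi_conjZ nu M : xi_conj (nu *: M) = nu^* *: xi_conj M.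
Proof. by apply/matrixP => i k; rewrite [RHS]mxE !xi_conjE mxE rmorphM; ring. Qed.

Lemma det_xi_conj M : \det (xi_conj M) = (\det M)^*.
Proof.
have xsignmx_sq : xsignmx *m xsignmx = 1%:M.
  apply/matrixP => i k; rewrite mul_diag_mx !mxE.
  by case: eqP => [-> | _]; rewrite ?xsign_sq ?mulr0.
by rewrite !det_mulmx det_map_mx mulrAC -det_mulmx xsignmx_sq det1 mul1r.
Qed.

Definition psimx : 'M[int]_5 := diag_mx (\row_i psicoef j i).

Lemma PsiE y : Psi j y = (y^T *m psimx *m y) 0 0.
Proof.
by rewrite mulmx_tr_diagE; apply: eq_bigr => i _; rewrite !mxE expr2 mulrA [psicoef j i * _]mulrC.
Qed.

Definition twist (A : 'M[int]_5) : 'M[algC]_5 :=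
  \matrix_(i, k) (tscale i / tscale k * (A i k)%:~R).

Lemma twistM A B : twist (A *m B) = twist A *m twist B.
Proof.
apply/matrixP => i k; rewrite !mxE rmorph_sum mulr_sumr; apply: eq_bigr => l _.
have := tscale_neq0 l; have := tscale_neq0 k; rewrite !mxE rmorphM /=.
by move: (tscale l) (tscale k) => tl tk tk0 tl0; field; rewrite tk0 tl0.
Qed.

Lemma twist1 : twist 1%:M = 1%:M.
Proof.
apply/matrixP => i k; rewrite !mxE; case: eqP => [-> | _]; last by rewrite mulr0.
by rewrite divff ?tscale_neq0 ?mulr1.
Qed.

Lemma twistN A : twist (- A) = - twist A.
Proof. by apply/matrixP => i k; rewrite !mxE rmorphN mulrN. Qed.

Lemma twist_unitmx A : A \in unitmx -> twist A \in unitmx /\ invmx (twist A) = twist (invmx A).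
Proof.
move=> uA; have e : twist A *m twist (invmx A) = 1%:M by rewrite -twistM mulmxV ?twist1.
have [uL _] := mulmx1_unit e.
by split => //; rewrite -[LHS]mulmx1 -e mulKmx.
Qed.

Lemma xi_conj_twist A : xi_conj (twist A) = twist A.
Proof.
apply/matrixP => i k; rewrite xi_conjE !mxE rmorphM rmorphM fmorphV /= rmorph_int.
rewrite !conj_tscale; have := tscale_neq0 k; have := xsign_sq i; have := xsign_sq k.
move: (xsign i) (xsign k) (tscale k) => s t c tt ss c0.
have t0 : t != 0 by apply/eqP => t0; move: tt; rewrite t0 mul0r => /eqP; rewrite eq_sym oner_eq0.
transitivity (s * s * (tscale i / c * (A i k)%:~R)); first by field; rewrite c0 t0.
by rewrite ss mul1r.
Qed.

Lemma twist_scale_inj nu nu' A B : nu *: twist A = nu' *: twist B ->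
  nu *: map_mx intr A = nu' *: map_mx intr B.
Proof.
move=> /matrixP eAB; apply/matrixP => i k; move: (eAB i k); rewrite !mxE.
rewrite mulrCA [RHS]mulrCA; apply: mulfI.
by rewrite mulf_neq0 ?invr_eq0 ?tscale_neq0.
Qed.

Definition untwist_form (M : 'M[algC]_5) : 'M[algC]_5 :=
  \matrix_(a, b) (M a b / (tscale a * (tscale b)^*)).

Lemma untwist_form_inj : injective untwist_form.
Proof.
move=> M N /matrixP eMN; apply/matrixP => a b; move: (eMN a b); rewrite !mxE.
by apply: mulIf; rewrite invr_eq0 mulf_neq0 ?conjC_eq0 ?tscale_neq0.
Qed.

Lemma hermJ_untwist : hermJ = untwist_form (map_mx intr psimx).
Proof.
apply/matrixP => a b; rewrite !mxE; case: eqP => [-> | _]; last by rewrite mulr0n mul0r.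
by rewrite !mulr1n psicoefE mulfK // mulf_neq0 ?conjC_eq0 ?tscale_neq0.
Qed.

Lemma gram_twist A : gram (twist A) = untwist_form (map_mx intr (A^T *m psimx *m A)).
Proof.
apply/matrixP => a b; rewrite mulmx_tr_diagE mxE mxE mulmx_tr_diagE rmorph_sum mulr_suml.
apply: eq_bigr => i _; rewrite !mxE !rmorphM fmorphV /= !rmorph_int psicoefE.
have := tscale_neq0 a; have := tscale_neq0 b; rewrite -(conjC_eq0 (tscale b)).
move: (tscale a) (tscale b)^* => ta tb tb0 ta0.
by field; rewrite ta0 tb0.
Qed.

Lemma OPsi_orth A : A^T *m psimx *m A = psimx -> OPsi j A.
Proof.
move=> orthA; split.
  have detP0 : \det psimx != 0.
    rewrite det_diag; apply/prodf_neq0 => i _; rewrite mxE /psicoef.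
    by case: (i == ord0) => //; case: ifP.
  rewrite unitmxE; apply/unitrPr; exists (\det A); apply: (mulIf detP0).
  by rewrite mul1r -{2}orthA !det_mulmx det_tr mulrAC.
move=> y; rewrite !PsiE.
have -> : (A *m y)^T *m psimx *m (A *m y) = y^T *m (A^T *m psimx *m A) *m y.
  by rewrite trmx_mul !mulmxA.
by rewrite orthA.
Qed.

Lemma orth_OPsi A : OPsi j A -> A^T *m psimx *m A = psimx.
Proof.
case=> _ psiA; apply/eqP; rewrite -subr_eq0; apply/eqP/quadratic_form_eq0.
  by rewrite linearB /= !trmx_mul trmxK /psimx tr_diag_mx mulmxA.
move=> y; rewrite mulmxBr mulmxBl mxE [(- _ : 'M_1) 0 0]mxE -PsiE -psiA PsiE trmx_mul !mulmxA.
exact: subrr.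
Qed.

Lemma OPsi_inv A : OPsi j A -> OPsi j (invmx A).
Proof.
case=> uA psiA; split; first by rewrite unitmx_inv.
by move=> y; rewrite -psiA mulKVmx.
Qed.

Lemma orth_dvd3 A (i k : 'I_5) : A^T *m psimx *m A = psimx ->
  (5 - j <= k)%N -> ~~ (5 - j <= i)%N -> exists N, A i k = 3 * N.
Proof.
move=> orthA hk hi.
have uAT : A^T \in unitmx by rewrite unitmx_tr; case: (OPsi_orth orthA).
(* [psimx *m A = A^-T *m psimx], and column [k] of [psimx] is [3 e_k] *)
set w := psimx *m A *m delta_mx k (0 : 'I_1).
have ATw : A^T *m w = 3 *: delta_mx k 0.
  rewrite /w !mulmxA orthA; apply/matrixP => m n; rewrite -colE !mxE (ord1 n) eqxx andbT.
  case: eqP => [-> | _]; last by rewrite mulr0n mulr0.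
  have k0 : (k == ord0) = false by apply/eqP => k0; move: hk j_le4; rewrite k0 /=; lia.
  by rewrite /psicoef hk k0 mulr1n mulr1.
have psi_i2 : psicoef j i * psicoef j i = 1 by rewrite /psicoef (negPf hi); case: (i == ord0).
exists (psicoef j i * (invmx A^T *m delta_mx k (0 : 'I_1)) i 0).
rewrite -[A i k]mul1r -{1}psi_i2 -mulrA.
have -> : psicoef j i * A i k = w i 0 by rewrite /w -colE mxE /psimx mul_diag_mx !mxE.
by rewrite -(mulKmx uAT w) ATw -scalemxAr mxE mulrCA.
Qed.

Lemma twist_eisenstein A : A^T *m psimx *m A = psimx -> mxE5 (twist A).
Proof.
move=> orthA i k; apply/eisensteinP; rewrite mxE /tscale.
case: (boolP (5 - j <= i)%N) => hi; case: (boolP (5 - j <= k)%N) => hk.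
- by rewrite divff ?theta_neq0 // mul1r rpred_int.
- by rewrite divr1 rpredM ?rpred_int ?eisenstein_theta.
- have [N ->] := orth_dvd3 orthA hk hi.
  have -> : 1 / theta * (3 * N)%:~R = - (N%:~R * theta).
    rewrite intrM (_ : (3 : int)%:~R = - theta ^+ 2); last by rewrite thetaX2 opprK.
    by have := theta_neq0; move: theta => t t0; field.
  by rewrite rpredN rpredM ?rpred_int ?eisenstein_theta.
- by rewrite divr1 mul1r rpred_int.
Qed.

Lemma inH_mulmx L x : L \in unitmx -> gram L = hermJ -> xi_conj L = L ->
  inH j x -> inH j (L *m x).
Proof.
move=> uL gL xiL [x0 xneg [c xc]]; split.
- by apply: contraNneq x0 => Lx0; rewrite -(mulKmx uL x) Lx0 mulmx0.
- by rewrite gram_hform.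
- by exists c; rewrite xi_mulmx xiL xc scalemxAr.
Qed.

Lemma StabR_twist A : OPsi j A -> StabR j (twist A).
Proof.
move=> OA; have [uA _] := OA; have [uL invL] := twist_unitmx uA.
have orthA := orth_OPsi OA; have orthAV := orth_OPsi (OPsi_inv OA).
have gL : gram (twist A) = hermJ by rewrite gram_twist orthA hermJ_untwist.
have gLV : gram (invmx (twist A)) = hermJ by rewrite invL gram_twist orthAV hermJ_untwist.
have xiLV : xi_conj (invmx (twist A)) = invmx (twist A) by rewrite invL xi_conj_twist.
split.
- split; [exact: twist_eisenstein | exact: uL | | by move=> x y _ _; apply: gram_hform].
  by rewrite invL; apply: twist_eisenstein.
- by move=> x; apply: inH_mulmx => //; apply: xi_conj_twist.
- move=> y hy; exists (invmx (twist A) *m y); split; last by rewrite mulKVmx.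
  by apply: inH_mulmx; rewrite ?unitmx_inv.
Qed.

Definition pencil (x : nat) (k : 'I_5) : 'cV[algC]_5 :=
  x%:R *: delta_mx ord0 0 + tscale k *: delta_mx k 0.

Lemma xi_delta0 : xi j (delta_mx ord0 0) = delta_mx ord0 0.
Proof.
apply/matrixP => i z; rewrite !mxE -/(xsign i) (ord1 z) /=.
by case: eqP => [-> | _]; rewrite ?xsign0 ?conjC1 ?conjC0 ?mul1r ?mulr0.
Qed.

Lemma inH_delta0 : inH j (delta_mx ord0 0).
Proof.
split.
- by apply/eqP => /matrixP /(_ ord0 0); rewrite !mxE eqxx => /eqP; rewrite oner_eq0.
- by rewrite -[delta_mx _ _]mul1mx hform_delta gram1 !mxE eqxx mulr1n ltrN10.
- by exists 1; rewrite scale1r xi_delta0.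
Qed.

Lemma pencilE x k i z : pencil x k i z = x%:R * (i == ord0)%:R + tscale k * (i == k)%:R.
Proof. by rewrite !mxE (ord1 z) !eqxx !andbT. Qed.

Lemma xi_pencil x k : k != ord0 -> xi j (pencil x k) = pencil x k.
Proof.
move=> k0; apply/matrixP => i z; rewrite mxE !pencilE -/(xsign i).
case: (eqVneq i ord0) => [-> | i0].
  by rewrite eq_sym (negPf k0) xsign0 !mulr0 !addr0 mulr1 mul1r conjC_nat.
rewrite !mulr0 !add0r; case: eqP => [-> | _]; last by rewrite mulr0 conjC0 mulr0.
by rewrite !mulr1 conj_tscale mulrA xsign_sq mul1r.
Qed.

Lemma inH_pencil x k : k != ord0 -> (2 <= x)%N -> inH j (pencil x k).
Proof.
move=> k0 x2; split.
- apply/eqP => /matrixP /(_ ord0 0); rewrite pencilE mxE eqxx eq_sym (negPf k0).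
  by rewrite mulr1 mulr0 addr0 => /eqP; rewrite pnatr_eq0; case: x x2.
- rewrite /hform (bigD1 ord0) //= (bigD1 k) //= big1 => [|i /andP[i0 ik]]; last first.
    by rewrite pencilE (negPf i0) (negPf ik) !(mulr0, addr0, mul0r).
  rewrite !pencilE !eqxx eq_sym (negPf k0) /hsign eqxx (negPf k0) !mulr1 !mulr0 !addr0 !add0r.
  have := psicoefE k; rewrite /hsign (negPf k0) !mul1r => <-.
  rewrite conjC_nat mulN1r mulNr -natrM /psicoef (negPf k0) addrC subr_lt0.
  by case: ifP => _; rewrite ltr_nat; nia.
- by exists 1; rewrite scale1r xi_pencil.
Qed.

Lemma StabR_eigen g v : StabR j g -> inH j v -> xi j v = v ->
  exists c, invmx g *m xi_conj g *m v = c *: v.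
Proof.
case=> -[_ ug _ _] gH _ hv xiv; have [_ _ [c hc]] := gH v hv.
by exists c; rewrite -mulmxA -{1}xiv -xi_mulmx hc -scalemxAr mulKmx.
Qed.

(* [e_0], [pencil 2 k] and [pencil 3 k] are xi_j-fixed points of [H^4_j], hence eigenvectors
   of [g^-1 (S conj(g) S)]; by [eigenvector_pencil] so is [e_k], with the eigenvalue of [e_0]. *)
Lemma StabR_xi_conj g : StabR j g -> exists lam, xi_conj g = lam *: g.
Proof.
move=> hg; have [[_ ug _ _] _ _] := hg; set M := invmx g *m xi_conj g.
have [c0 Me0] := StabR_eigen hg inH_delta0 xi_delta0.
suff Mk : forall k : 'I_5, M *m delta_mx k (0 : 'I_1) = c0 *: delta_mx k 0.
  have -> : xi_conj g = g *m M by rewrite mulKVmx.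
  exists c0; rewrite -mul_mx_scalar; congr (_ *m _); apply/matrixP => a k.
  by move/matrixP: (Mk k) => /(_ a 0); rewrite -colE !mxE eqxx andbT mulr_natr.
move=> k; case: (eqVneq k ord0) => [-> // | k0].
have indep p q : p *: delta_mx ord0 0 + q *: (tscale k *: delta_mx k 0) = 0 :> 'cV_5 ->
    p = 0 /\ q = 0.
  move=> /matrixP e; move: (e ord0 0) (e k 0); rewrite !mxE !eqxx eq_sym (negPf k0) /=.
  rewrite !mulr0 mulr1 addr0 add0r mulr1 => -> /eqP; rewrite mulf_eq0 (negPf (tscale_neq0 k)).
  by rewrite orbF => /eqP.
have [c1 Me1] := StabR_eigen hg (inH_pencil k0 (isT : (2 <= 2)%N)) (xi_pencil 2 k0).
have [c2 Me2] := StabR_eigen hg (inH_pencil k0 (isT : (2 <= 3)%N)) (xi_pencil 3 k0).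
have x23 : 2%:R != 3%:R :> algC by rewrite eqr_nat.
have := eigenvector_pencil x23 indep Me0 Me1 Me2.
by rewrite -scalemxAr scalerA mulrC -scalerA => /(scalerI (tscale_neq0 k)).
Qed.

Lemma xi_conj_scalar_norm g lam : g \in unitmx -> xi_conj g = lam *: g -> lam * lam^* = 1.
Proof.
move=> ug xig; have g0 : g != 0 by apply: contraTneq ug => ->; rewrite unitmxE det0 unitr0.
move: (xi_conjK g); rewrite xig xi_conjZ xig scalerA => /eqP.
rewrite -subr_eq0 -{2}[g]scale1r -scalerBl scaler_eq0 (negPf g0) orbF subr_eq0 mulrC.
by move/eqP.
Qed.

Lemma xi_conj_scalar_inv g lam : Gamma g -> xi_conj g = lam *: g -> lam^-1 \in eisenstein.
Proof.
move=> Gg xig; have [gE _ _ _] := Gg.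
have conj_g i : (g i ord0)^* = lam * xsign i * g i ord0.
  move: (congr1 (fun M : 'M[algC]_5 => M i ord0) xig); rewrite /= xi_conjE mxE xsign0 mulr1 => e.
  by rewrite -[LHS]mul1r -(xsign_sq i) -[LHS]mulrA e; ring.
set w := \sum_i hsign i * xsign i * g i ord0 ^+ 2.
have lam_w : lam * w = -1.
  move/matrixP: (Gamma_gram Gg) => /(_ ord0 ord0); rewrite mulmx_tr_diagE !mxE eqxx mulr1n.
  rewrite (_ : hsign ord0 = -1) // => <-.
  by rewrite /w mulr_sumr; apply: eq_bigr => i _; rewrite !mxE conj_g; ring.
have -> : lam^-1 = - w.
  have lam0 : lam != 0 by apply: contra_eqN lam_w => /eqP->; rewrite mul0r eq_sym oppr_eq0 oner_eq0.
  by apply: (mulfI lam0); rewrite divff // mulrN lam_w opprK.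
rewrite rpredN rpred_sum // => i _.
have sign_eis (b : bool) : (if b then -1 else 1) \in eisenstein by case: b; rewrite ?rpredN rpred1.
by rewrite !rpredM ?sign_eis //; apply/eisensteinP.
Qed.

(* [lam] is a unit of norm one; comparing [det g] with its conjugate
   [lam^5 det g] rules out the units [-omega^k], whose cube is [-1]. *)
Lemma xi_conj_scalar_cube g lam : Gamma g -> xi_conj g = lam *: g ->
  eisenstein_unit lam /\ lam ^+ 3 = 1.
Proof.
move=> Gg xig; have [_ ug _ _] := Gg.
have lam_norm := xi_conj_scalar_norm ug xig.
have lam0 : lam != 0 by apply: contra_eqN lam_norm => /eqP->; rewrite mul0r eq_sym oner_eq0.
have lamV : lam^-1 = lam^* by apply: (mulfI lam0); rewrite divff.
have ulam : eisenstein_unit lam.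
  split => //; last exact: xi_conj_scalar_inv Gg xig.
  by rewrite -[lam]conjCK -lamV eisenstein_conj // (xi_conj_scalar_inv Gg xig).
split => //; have ud := Gamma_det_unit Gg.
have d_conj : (\det g)^* = lam ^+ 5 * \det g by rewrite -det_xi_conj xig detZ.
have lam15 : lam ^+ 15 = 1.
  have : lam ^+ 5 * \det g ^+ 2 = 1 by rewrite expr2 mulrA -d_conj mulrC eisenstein_unit_norm.
  move/(congr1 (fun x => x ^+ 3)); rewrite expr1n exprMn -!exprM.
  by rewrite (eisenstein_unit_root6 ud) mulr1.
by rewrite -lam15 (_ : 15 = 3 + 6 * 2)%N // exprD exprM eisenstein_unit_root6 // expr1n mulr1.
Qed.

Lemma xi_real_twist h : mxE5 h -> xi_conj h = h -> exists A, h = twist A.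
Proof.
move=> hE /matrixP xih.
pose a i k := h i k * tscale k / tscale i.
have a_real i k : (a i k)^* = a i k.
  have conj_h : (h i k)^* = xsign i * h i k * xsign k.
    rewrite -{2}xih xi_conjE; transitivity (xsign i * xsign i * (h i k)^* * (xsign k * xsign k)).
      by rewrite !xsign_sq mul1r mulr1.
    by ring.
  rewrite /a !rmorphM fmorphV /= conj_h !conj_tscale.
  have := tscale_neq0 i; have := xsign_sq i; have := xsign_sq k.
  move: (xsign i) (xsign k) (tscale i) => s t c tt ss c0.
  have s0 : s != 0 by apply: contra_eqN ss => /eqP->; rewrite mul0r eq_sym oner_eq0.
  transitivity (t * t * (h i k * tscale k / c)); last by rewrite tt mul1r.
  by field; rewrite s0 c0.
have a_int i k : exists n : int, a i k == n%:~R.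
  suff [n an] : exists n : int, a i k = n%:~R by exists n; apply/eqP.
  have hik : h i k \in eisenstein by apply/eisensteinP.
  move: (a_real i k); rewrite /a /tscale; case: ifP => _; case: ifP => _.
  - by rewrite mulfK ?theta_neq0 //; apply: eisenstein_real.
  - by rewrite divr1; apply: eisenstein_real; rewrite rpredM ?eisenstein_theta.
  - rewrite mulr1 => ar; have [n ->] : exists n : int, h i k = n%:~R * theta.
      apply: eisenstein_imag => //.
      by rewrite -[h i k](divfK theta_neq0) rmorphM /= ar conj_theta mulrN.
    by exists n; rewrite mulfK ?theta_neq0.
  - by rewrite mulr1 divr1; apply: eisenstein_real.
exists (\matrix_(i, k) xchoose (a_int i k)); apply/matrixP => i k.
rewrite !mxE -(eqP (xchooseP (a_int i k))) /a.
have := tscale_neq0 i; have := tscale_neq0 k; move: (tscale i) (tscale k) => c d d0 c0.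
by field; rewrite c0 d0.
Qed.

Definition twisted (g : 'M[algC]_5) (A : 'M[int]_5) :=
  exists2 nu, eisenstein_unit nu & g = nu *: twist A.

Lemma StabR_twisted g : StabR j g -> exists A, twisted g A.
Proof.
move=> hg; have [Gg _ _] := hg; have [gE _ _ _] := Gg.
have [lam xig] := StabR_xi_conj hg; have [ulam lam3] := xi_conj_scalar_cube Gg xig.
have lam0 : lam != 0 by case: ulam.
have conj_lam : lam^* = lam^-1.
  by apply: (mulfI lam0); rewrite divff // (xi_conj_scalar_norm _ xig) //; case: Gg.
have lam_sq : lam * lam = lam^-1.
  by apply: (mulfI lam0); rewrite divff // -lam3 exprS expr2.
have [A gA] : exists A, lam^-1 *: g = twist A.
  apply: xi_real_twist.
    move=> i k; apply/eisensteinP; rewrite mxE rpredM //; first by case: (eisenstein_unitV ulam).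
    exact/eisensteinP.
  by rewrite xi_conjZ xig scalerA fmorphV /= conj_lam invrK lam_sq.
by exists A, lam => //; rewrite -gA scalerA divff ?scale1r.
Qed.

Lemma twisted_twist A : twisted (twist A) A.
Proof. by exists 1; rewrite ?scale1r //; apply: eisenstein_unit1. Qed.

Lemma twisted_mul g1 g2 A1 A2 :
  twisted g1 A1 -> twisted g2 A2 -> twisted (g1 *m g2) (A1 *m A2).
Proof.
move=> [nu1 u1 ->] [nu2 u2 ->]; exists (nu1 * nu2); first exact: eisenstein_unitM.
by rewrite -scalemxAl -scalemxAr scalerA twistM.
Qed.

Lemma twistedN g A : twisted g (- A) -> twisted g A.
Proof.
case=> nu u ->; exists (- nu); first exact: eisenstein_unitN.
by rewrite twistN scalerN scaleNr.
Qed.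

Lemma twisted1 g : twisted g 1%:M <-> unit_scalar g.
Proof.
rewrite /twisted twist1.
split=> [[u [u0 /eisensteinP uE /eisensteinP uiE] ->] | [u [u0 uE uiE ->]]].
  by exists u; rewrite scalemx1.
by exists u; rewrite ?scalemx1 //; split=> //; apply/eisensteinP.
Qed.

Lemma twisted_uniq g A B : twisted g A -> twisted g B -> pm_eq A B.
Proof. by move=> [nu u ->] [nu' u' /twist_scale_inj]; apply: scale_intmx_uniq. Qed.

Lemma twisted_orth g A : Gamma g -> twisted g A -> A^T *m psimx *m A = psimx.
Proof.
move=> Gg [nu u gA]; apply/matrixP => a b; apply: (@intr_inj algC).
have /untwist_form_inj/matrixP/(_ a b) :
    untwist_form (map_mx intr (A^T *m psimx *m A)) = untwist_form (map_mx intr psimx).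
  by rewrite -gram_twist -hermJ_untwist -(Gamma_gram Gg) gA gramZ eisenstein_unit_norm // scale1r.
by rewrite !mxE.
Qed.

End Twist.

Theorem theorem5p1 : forall j : nat, (j <= 4)%N -> PGammaR_iso_PO j.
Proof.
move=> j hj; pose f g := epsilon (inhabits (0 : 'M[int]_5)) (twisted j g).
have f_twisted g A : twisted j g A -> twisted j g (f g).
  by move=> gA; apply: epsilon_spec; exists A.
have f_StabR g : StabR j g -> twisted j g (f g).
  by move=> /(StabR_twisted hj) [A /f_twisted].
exists f; split.
- move=> g hg; apply/OPsi_orth/(twisted_orth hj _ (f_StabR g hg)); by case: hg.
- move=> g1 g2 h1 h2; have t12 := twisted_mul (f_StabR _ h1) (f_StabR _ h2).
  exact: twisted_uniq (f_twisted _ _ t12) t12.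
- move=> g hg; split => [fg | /(twisted1 j) g1]; last exact: twisted_uniq (f_twisted _ _ g1) g1.
  by apply/(twisted1 j); have := f_StabR g hg; case: fg => ->; last apply: twistedN.
- move=> A hA; exists (twist j A); split; first exact: StabR_twist.
  exact: twisted_uniq (f_twisted _ _ (twisted_twist j A)) (twisted_twist j A).
Qed.
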